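(* Let $X$ be a nonempty discrete (finite or countable) set, $p^*$ a probability distribution on $X$, $X^{\checkmark}=\{x\in X:p^*(x)>0\}$, and let $x_1,\dots,x_N\in X^{\checkmark}$ ($N\ge1$) with dataset $\mathcal{X}=\{x_1,\dots,x_N\}$ and $q(x)=\frac1N\#\{i:x_i=x\}$. Let $F$ be a set of probability distributions on $X$, and for $x\in X$ let $C(x)=\{x'\in X:\ f(x')=f(x)\text{ for all } f\in F\}$. Suppose (i) $F$ generalizes from $\mathcal{X}$ to $X^{\checkmark}$, i.e., $\{C(x):x\in\mathcal{X}\}=\{C(x):x\in X^{\checkmark}\}$; (ii) $p^*\in F$; (iii) no two distinct data points of $\mathcal{X}$ lie in the same class, i.e., $C(x)\ne C(x')$ for distinct $x,x'\in\mathcal{X}$. Then every maximizer $\hat p^*_F$ of $\mathbb{E}_{q(x)}[\log p(x)]=\frac1N\sum_i\log p(x_i)$ over $p\in F$ is complete: $\hat p^*_F(x)>0$ for all $x\in X^{\checkmark}$.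
   Context: A probability distribution on $X$ is $p:X\to[0,\infty)$ with $\sum_x p(x)=1$; $\log 0=-\infty$. A distribution is complete if it assigns positive mass to every valid point $x\in X^{\checkmark}$. *)

From HB Require Import structures.
From mathcomp Require Import all_boot all_order all_algebra.
From mathcomp Require Import all_classical all_reals all_analysis.
Set Implicit Arguments. Unset Strict Implicit. Unset Printing Implicit Defensive.
Import Order.TTheory GRing.Theory Num.Theory.
Local Open Scope classical_set_scope.
Local Open Scope ring_scope.

Definition is_distr (R : realType) (X : choiceType) (p : X -> R) : Prop :=
  (forall x, 0 <= p x) /\ (\esum_(x in [set: X]) (p x)%:E = 1)%E.

Definition elog (R : realType) (r : R) : \bar R :=
  if 0 < r then (ln r)%:E else -oo%E.

Definition avg_loglik (R : realType) (X : Type) (N : nat) (xs : 'I_N -> X)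
  (p : X -> R) : \bar R :=
  ((N%:R^-1)%:E * \sum_(i < N) elog (p (xs i)))%E.

Definition cls (R : realType) (X : Type) (F : set (X -> R)) (x : X) : set X :=
  [set x' | forall f, F f -> f x' = f x].

Definition valid (R : realType) (X : Type) (pstar : X -> R) : set X :=
  [set x | 0 < pstar x].

From HB Require Import structures.
From mathcomp Require Import all_boot all_order all_algebra.
From mathcomp Require Import all_classical all_reals all_analysis.
Set Implicit Arguments. Unset Strict Implicit. Unset Printing Implicit Defensive.
Import Order.TTheory GRing.Theory Num.Theory.
Local Open Scope classical_set_scope.
Local Open Scope ring_scope.

(* Since p* is in F and positive on the data, its log-likelihood is finite, so
   that of any maximizer is finite too; a single data point of zero mass would
   make it -oo, hence a maximizer is positive on the data. By generalization
   every valid point shares its class with a data point, and every member of F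
   is constant on classes. *)

Section Elog.
Variable R : realType.

Lemma elog_fin_num (r : R) : 0 < r -> elog r \is a fin_num.
Proof. by rewrite /elog => ->. Qed.

Lemma elog_le0 (r : R) : r <= 0 -> elog r = -oo%E.
Proof. by rewrite /elog ltNge => ->. Qed.

End Elog.

Section AvgLoglik.
Variables (R : realType) (X : Type) (N : nat) (xs : 'I_N -> X).
Implicit Type p : X -> R.

Lemma avg_loglik_fin_num p :
  (forall i, 0 < p (xs i)) -> avg_loglik xs p \is a fin_num.
Proof.
move=> p_gt0; apply: fin_numM => //.
by apply/sum_fin_numP => i _ _; apply: elog_fin_num.
Qed.

Lemma avg_loglik_Ny p i : p (xs i) <= 0 -> avg_loglik xs p = -oo%E.
Proof.
move=> p_le0; have N_gt0 : (0 < N)%N by apply: leq_ltn_trans (ltn_ord i).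
rewrite /avg_loglik (bigD1 i) //= elog_le0 // addNye.
by apply: gt0_muleNy; rewrite lte_fin invr_gt0 ltr0n.
Qed.

Lemma avg_loglik_neqNy_gt0 p i : avg_loglik xs p != -oo%E -> 0 < p (xs i).
Proof. by apply: contraNT; rewrite -leNgt => /avg_loglik_Ny ->. Qed.

Lemma avg_loglik_maximizer_gt0 (F : set (X -> R)) p phat :
  F p -> (forall i, 0 < p (xs i)) ->
  (forall q, F q -> (avg_loglik xs q <= avg_loglik xs phat)%E) ->
  forall i, 0 < phat (xs i).
Proof.
move=> Fp p_gt0 phat_max i; apply: avg_loglik_neqNy_gt0.
have := avg_loglik_fin_num p_gt0; apply: contraTN => /eqP phatNy.
by have := phat_max p Fp; rewrite phatNy leeNy_eq => /eqP ->.
Qed.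

End AvgLoglik.

Lemma cls_eq_eval (R : realType) (X : Type) (F : set (X -> R)) f x y :
  F f -> cls F x = cls F y -> f x = f y.
Proof. by move=> Ff xy; have /(_ f Ff) : cls F y x by rewrite -xy. Qed.

Theorem mainTheorem7 (R : realType) (X : countType) (pstar : X -> R)
  (N : nat) (xs : 'I_N -> X) (F : set (X -> R)) (phat : X -> R) :
  is_distr pstar ->
  (0 < N)%N ->
  (forall i, valid pstar (xs i)) ->
  (forall f, F f -> is_distr f) ->
  (* (i) F generalizes from the dataset to X^check *)
  (fun i => cls F (xs i)) @` [set: 'I_N] = cls F @` valid pstar ->
  (* (ii) p* in F *)
  F pstar ->
  (* (iii) distinct data points lie in distinct classes *)
  (forall i j, xs i <> xs j -> cls F (xs i) <> cls F (xs j)) ->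
  (* phat is a maximizer of the expected log-likelihood over F *)
  F phat ->
  (forall p, F p -> (avg_loglik xs p <= avg_loglik xs phat)%E) ->
  forall x, valid pstar x -> 0 < phat x.
Proof.
move=> _ _ pstar_data _ generalizes Fpstar _ Fphat phat_max x x_valid.
have phat_data := avg_loglik_maximizer_gt0 Fpstar pstar_data phat_max.
have : (cls F @` valid pstar) (cls F x) by exists x.
rewrite -generalizes => -[i _ cls_i].
by rewrite -(cls_eq_eval Fphat cls_i).
Qed.
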